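(* Let $G$ be a simple directed graph. The unrestricted transition matrix of simple moves $T^u_{\mathrm{SM}}=p_{\mathrm{SEF}}T^u_{\mathrm{SEF}}+p_{\mathrm{DEM}}T^u_{\mathrm{DEM}}$ (with $p_{\mathrm{SEF}},p_{\mathrm{DEM}}\in(0,1)$, $p_{\mathrm{SEF}}+p_{\mathrm{DEM}}=1$) is doubly stochastic and irreducible on the state space $\mathcal{G}_0^\infty(G)$. If $G$ further contains at least one double edge, $T^u_{\mathrm{SM}}$ is also aperiodic.
   Context: A simple directed graph is a pair $G=(V,E)$ with $V$ finite and $E\subseteq (V\times V)\setminus\{(v,v):v\in V\}$. An edge $(i,j)\in E$ is a single edge if $(j,i)\notin E$; an ordered pair $(k,l)$ is a double edge if both $(k,l),(l,k)\in E$. $\mathrm{pr}(V,E)=(V,\{\{u,v\}:(u,v)\in E\})$. $\mathcal{G}_0^\infty(G)$ is the (finite) set of all simple directed graphs $G'$ on $V$ with $\mathrm{pr}(G')=\mathrm{pr}(G)$ and the same number of directed edges as $G$. Moves: $\mathrm{SEF}_{i,j}(V,E)=(V,(E\setminus\{(i,j)\})\cup\{(j,i)\})$ for a single edge $(i,j)$; $\mathrm{DEM}^{k,l}_{i,j}(V,E)=(V,(E\setminus\{(k,l)\})\cup\{(j,i)\})$ for a single edge $(i,j)$ and a double edge $(k,l)$. Transition matrices on $\mathcal{G}_0^\infty(G)$: $T^u_{\mathrm{SEF}}(H,H')$ is the probability that a single edge $(i,j)$ of $H$, drawn uniformly among all single edges of $H$, satisfies $\mathrm{SEF}_{i,j}(H)=H'$;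 $T^u_{\mathrm{DEM}}(H,H')$ is the probability that a single edge $(i,j)$ and a double edge $(k,l)$ of $H$, each drawn uniformly among the single (resp. double) edges of $H$, satisfy $\mathrm{DEM}^{k,l}_{i,j}(H)=H'$. Convention: if $H$ has no eligible edges for a move (no single edge for SEF; no single edge or no double edge for DEM), that move leaves $H$ unchanged, i.e. the corresponding matrix has $1$ on the diagonal entry $(H,H)$. A matrix is doubly stochastic if it and its transpose are stochastic; irreducible if every state is reachable from every other with positive probability in finitely many steps; aperiodic if the gcd of the return times of the chain is $1$. *)

From HB Require Import structures.
From mathcomp Require Import all_boot all_order all_algebra.
Set Implicit Arguments. Unset Strict Implicit. Unset Printing Implicit Defensive.
Import Order.TTheory GRing.Theory Num.Theory.
Local Open Scope ring_scope.

Section Graphs.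
Variable V : finType.

Definition loopless (E : {set V * V}) : bool := [forall v : V, (v, v) \notin E].

Definition pr (E : {set V * V}) : {set {set V}} := [set [set e.1; e.2] | e in E].

Definition GG0 (E : {set V * V}) : {set {set V * V}} :=
  [set E' : {set V * V} | [&& loopless E', pr E' == pr E & #|E'| == #|E|]].

Definition single_edges (H : {set V * V}) : {set V * V} :=
  [set e in H | (e.2, e.1) \notin H].
Definition double_edges (H : {set V * V}) : {set V * V} :=
  [set e in H | (e.2, e.1) \in H].

Definition SEF (e : V * V) (H : {set V * V}) : {set V * V} :=
  (H :\ e) :|: [set (e.2, e.1)].
(* DEM^{k,l}_{i,j} with e = (i,j), d = (k,l) *)
Definition DEM (e d : V * V) (H : {set V * V}) : {set V * V} :=
  (H :\ d) :|: [set (e.2, e.1)].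

Variable R : realFieldType.

Definition T_SEF (H H' : {set V * V}) : R :=
  if single_edges H == set0 then (H == H')%:R
  else #|[set e in single_edges H | SEF e H == H']|%:R / #|single_edges H|%:R.

Definition T_DEM (H H' : {set V * V}) : R :=
  if (single_edges H == set0) || (double_edges H == set0) then (H == H')%:R
  else #|[set p in setX (single_edges H) (double_edges H) | DEM p.1 p.2 H == H']|%:R
       / (#|single_edges H| * #|double_edges H|)%:R.

Definition T_SM (pSEF pDEM : R) (H H' : {set V * V}) : R :=
  pSEF * T_SEF H H' + pDEM * T_DEM H H'.

(* Matrices on a finite state space S (entries outside S are irrelevant). *)
Definition doubly_stochastic (S : {set {set V * V}}) (T : {set V * V} -> {set V * V} -> R) : Prop :=
  [/\ (forall H H', H \in S -> H' \in S -> 0 <= T H H'),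
      (forall H, H \in S -> \sum_(H' in S) T H H' = 1) &
      (forall H', H' \in S -> \sum_(H in S) T H H' = 1)].

Fixpoint Tpow (S : {set {set V * V}}) (T : {set V * V} -> {set V * V} -> R) (n : nat)
  (H H' : {set V * V}) : R :=
  match n with
  | 0 => (H == H')%:R
  | n'.+1 => \sum_(K in S) T H K * Tpow S T n' K H'
  end.

Definition irreducible (S : {set {set V * V}}) (T : {set V * V} -> {set V * V} -> R) : Prop :=
  forall H H', H \in S -> H' \in S -> exists n : nat, 0 < Tpow S T n H H'.

(* gcd of the return times {n > 0 | T^n(H,H) > 0} equals 1, for every state H:
   the only natural number dividing all return times is 1. *)
Definition aperiodic (S : {set {set V * V}}) (T : {set V * V} -> {set V * V} -> R) : Prop :=
  forall H, H \in S ->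
    forall d : nat, (forall n : nat, (0 < n)%N -> 0 < Tpow S T n H H -> (d %| n)%N) -> d = 1%N.

End Graphs.

(* Both moves are reversible inside G_0^oo(G): SEF_{j,i} undoes SEF_{i,j}, and
   DEM^{j,i}_{l,k} undoes DEM^{k,l}_{i,j}, since deleting (k,l) leaves (l,k) single
   and adding (j,i) makes it double.  All states have the same numbers of single and
   double edges, so each kernel chooses uniformly among equally many moves, and
   reversal matches the moves entering a state bijectively with those leaving it:
   column sums equal row sums.  For irreducibility, some SEF or DEM move always
   removes an edge of H missing from the target H'.  For aperiodicity, flipping a
   single edge twice returns in 2 steps, and DEM, DEM, SEF returns in 3. *)

From HB Require Import structures.
From mathcomp Require Import all_boot all_order all_algebra.
Import Order.TTheory GRing.Theory Num.Theory.

Set Implicit Arguments. Unset Strict Implicit. Unset Printing Implicit Defensive.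
Local Open Scope ring_scope.

Lemma eq_set2 (T : finType) (a b c d : T) :
  [set a; b] = [set c; d] -> (a = c /\ b = d) \/ (a = d /\ b = c).
Proof.
move=> eq_ab_cd.
have: a \in [set c; d] by rewrite -eq_ab_cd set21.
have: b \in [set c; d] by rewrite -eq_ab_cd set22.
have: c \in [set a; b] by rewrite eq_ab_cd set21.
have: d \in [set a; b] by rewrite eq_ab_cd set22.
by rewrite !inE => /orP[]/eqP e1 /orP[]/eqP e2 /orP[]/eqP e3 /orP[]/eqP e4; subst; auto.
Qed.

Section Exchange.
Variable T : finType.
Implicit Types (A B : {set T}) (x y z : T).

Definition exchange x y A : {set T} := A :\ x :|: [set y].

Lemma exchangeK A x y : x \in A -> y \notin A -> exchange y x (exchange x y A) = A.
Proof.
move=> xA yA; rewrite /exchange [A :\ x :|: _]setUC setU1K; last first.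
  by rewrite inE negb_and yA orbT.
by rewrite setUC setD1K.
Qed.

Lemma exchange_exchange A x y z : x \in A -> y \notin A -> z \in A -> x != z ->
  exchange z x (exchange x y A) = exchange z y A.
Proof.
move=> xA yA zA xz; apply/setP=> w; rewrite !inE.
case: (eqVneq w x) => [->|wx]; first by rewrite xA xz orbT.
case: (eqVneq w y) => [->|wy] /=; last by rewrite !orbF.
by rewrite !orbT andbT orbF; apply/eqP=> yz; rewrite yz zA in yA.
Qed.

Lemma card_exchange A x y : x \in A -> y \notin A -> #|exchange x y A| = #|A|.
Proof.
move=> xA yA; rewrite /exchange setUC cardsU1 inE negb_and yA orbT.
by rewrite (cardsD1 x A) xA.
Qed.

Lemma card_exchangeD_lt A B x y : x \in A -> x \notin B -> y \in B ->
  (#|exchange x y A :\: B| < #|A :\: B|)%N.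
Proof.
move=> xA xB yB.
have -> : exchange x y A :\: B = (A :\: B) :\ x.
  apply/setP=> w; rewrite !inE.
  case: (eqVneq w y) => [->|_] /=; first by rewrite yB /= andbF.
  by rewrite orbF andbCA.
by apply/proper_card/properD1; rewrite inE xB xA.
Qed.

End Exchange.

Section Edges.
Variable V : finType.
Implicit Types (E H : {set V * V}) (e d x y : V * V).

Definition rev_edge e : V * V := (e.2, e.1).

Lemma rev_edgeK : involutive rev_edge. Proof. by case. Qed.

Lemma SEF_exchange e H : SEF e H = exchange e (rev_edge e) H. Proof. by []. Qed.

Lemma DEM_exchange e d H : DEM e d H = exchange d (rev_edge e) H. Proof. by []. Qed.

Lemma mem_pr H e : e \in H -> [set e.1; e.2] \in pr H.
Proof. by move=> eH; apply/imsetP; exists e. Qed.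

Lemma mem_prP H a b : [set a; b] \in pr H -> (a, b) \in H \/ (b, a) \in H.
Proof.
by case/imsetP=> -[c d] cdH /eq_set2[[-> ->]|[-> ->]]; [left | right].
Qed.

Lemma pr_exchange H x y :
  pr (exchange x y H) = pr (H :\ x) :|: [set [set y.1; y.2]].
Proof. by rewrite /pr imsetU imset_set1. Qed.

Lemma prD1 H x : x \in H -> pr H = pr (H :\ x) :|: [set [set x.1; x.2]].
Proof. by move=> xH; rewrite /pr -{1}(setD1K xH) imsetU1 setUC. Qed.

Lemma GG0_edge_neq E H e : H \in GG0 E -> e \in H -> e.1 != e.2.
Proof.
rewrite inE => /and3P[/forallP loopless_H _ _] eH; apply/eqP=> e12.
by move: (loopless_H e.1); rewrite {2}e12 -surjective_pairing eH.
Qed.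

Lemma GG0_pr E H : H \in GG0 E -> pr H = pr E.
Proof. by rewrite inE => /and3P[_ /eqP]. Qed.

Lemma card_GG0 E H : H \in GG0 E -> #|H| = #|E|.
Proof. by rewrite inE => /and3P[_ _ /eqP]. Qed.

Lemma exchange_GG0 E H x y : H \in GG0 E -> x \in H -> y \notin H -> y.1 != y.2 ->
  pr (exchange x y H) = pr H -> exchange x y H \in GG0 E.
Proof.
move=> HS xH yH y12 pr_xyH; move: HS; rewrite !inE => /and3P[/forallP loopless_H prH cH].
rewrite pr_xyH prH card_exchange // cH !andbT.
apply/forallP=> v; rewrite !inE negb_or negb_and (negbTE (loopless_H v)) orbT /=.
by apply: contra y12 => /eqP <-.
Qed.

Lemma rev_edge_imset H : rev_edge @: H = rev_edge @^-1: H.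
Proof. exact: can2_imset_pre rev_edgeK rev_edgeK. Qed.

Lemma double_edgesE H : double_edges H = H :&: rev_edge @: H.
Proof. by apply/setP=> e; rewrite rev_edge_imset !inE. Qed.

Lemma single_edgesE H : single_edges H = H :\: rev_edge @: H.
Proof. by apply/setP=> e; rewrite rev_edge_imset !inE andbC. Qed.

Lemma setU_rev_edge H : H :|: rev_edge @: H = [set e | [set e.1; e.2] \in pr H].
Proof.
apply/setP=> -[a b]; rewrite rev_edge_imset !inE /=; apply/idP/idP.
- by case/orP=> abH; [exact: mem_pr abH | rewrite setUC; exact: mem_pr abH].
- by case/mem_prP=> ->; rewrite ?orbT.
Qed.

Lemma card_double_edges H :
  #|double_edges H| = (#|H| + #|H| - #|[set e | [set e.1; e.2] \in pr H]|)%N.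
Proof.
have := cardsUI H (rev_edge @: H).
rewrite card_imset; last exact: can_inj rev_edgeK.
by rewrite setU_rev_edge -double_edgesE => <-; rewrite addKn.
Qed.

Lemma card_single_edges H : #|single_edges H| = (#|H| - #|double_edges H|)%N.
Proof. by rewrite single_edgesE double_edgesE -(cardsID (rev_edge @: H) H) addKn. Qed.

Lemma card_double_edges_GG0 E H : H \in GG0 E -> #|double_edges H| = #|double_edges E|.
Proof.
by move=> HS; rewrite !card_double_edges (GG0_pr HS) (card_GG0 HS).
Qed.

Lemma card_single_edges_GG0 E H : H \in GG0 E -> #|single_edges H| = #|single_edges E|.
Proof.
by move=> HS; rewrite !card_single_edges (card_double_edges_GG0 HS) (card_GG0 HS).
Qed.

Lemma SEF_reversible E H e : H \in GG0 E -> e \in single_edges H ->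
  [/\ SEF e H \in GG0 E, rev_edge e \in single_edges (SEF e H)
    & SEF (rev_edge e) (SEF e H) = H].
Proof.
move=> HS; rewrite inE => /andP[eH reH].
have e12 := GG0_edge_neq HS eH.
have e_re : e != rev_edge e.
  by apply: contra e12; case: e {eH reH} => a b /eqP[->].
rewrite !SEF_exchange rev_edgeK exchangeK //; split => //.
- apply: exchange_GG0 => //=; first by rewrite eq_sym.
  by rewrite pr_exchange (prD1 eH) /= [[set e.2; e.1]]setUC.
- by rewrite !inE /= -surjective_pairing !eqxx orbT /= (negbTE e_re).
Qed.

Lemma DEM_reversible E H e d : H \in GG0 E ->
  e \in single_edges H -> d \in double_edges H ->
  [/\ DEM e d H \in GG0 E, rev_edge d \in single_edges (DEM e d H),
      rev_edge e \in double_edges (DEM e d H)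
    & DEM (rev_edge d) (rev_edge e) (DEM e d H) = H].
Proof.
move=> HS /setIdP[eH reH] /setIdP[dH rdH].
have {}reH : rev_edge e \notin H := reH; have {}rdH : rev_edge d \in H := rdH.
have d_rd : d != rev_edge d.
  by apply: contra (GG0_edge_neq HS dH); case: d {dH rdH} => a b /eqP[->].
have e_d : e != d by apply: contraNneq reH => ->.
have re_d : rev_edge e != d by apply: contraNneq reH => ->.
have re_rd : rev_edge e != rev_edge d by apply: contraNneq reH => ->.
rewrite !DEM_exchange rev_edgeK exchangeK //; split => //.
- apply: exchange_GG0 => //=; first by rewrite eq_sym (GG0_edge_neq HS eH).
  rewrite pr_exchange (prD1 dH) /=.
  have /setUidPl -> : [set [set e.2; e.1]] \subset pr (H :\ d).
    by rewrite sub1set setUC; apply: mem_pr; rewrite !inE e_d.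
  have /setUidPl -> // : [set [set d.1; d.2]] \subset pr (H :\ d).
  by rewrite sub1set setUC; apply: (mem_pr (e := rev_edge d)); rewrite !inE eq_sym d_rd.
- by rewrite !inE /= -surjective_pairing [rev_edge d == d]eq_sym d_rd rdH eqxx /= eq_sym re_d.
- by rewrite !inE /= -surjective_pairing eqxx orbT e_d eH.
Qed.

Lemma rev_edge_mem_pr E H H' e : H \in GG0 E -> H' \in GG0 E ->
  e \in H -> e \notin H' -> rev_edge e \in H'.
Proof.
move=> HS H'S eH eH'; have := mem_pr eH.
by rewrite (GG0_pr HS) -(GG0_pr H'S) => /mem_prP[]; rewrite -?surjective_pairing ?(negbTE eH').
Qed.

Lemma single_edge_of_new_double E H H' d : H \in GG0 E -> H' \in GG0 E ->
  d \in double_edges H' -> d \notin double_edges H ->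
  exists x, [/\ x \in single_edges H, x \in H' & rev_edge x \in H'].
Proof.
move=> HS H'S /setIdP[dH' rdH'] dD; have := mem_pr dH'.
rewrite (GG0_pr H'S) -(GG0_pr HS) => /mem_prP[]; rewrite -?surjective_pairing => xH.
- exists d; split=> //; rewrite inE xH; apply: contra dD => /= rdH.
  by rewrite inE xH.
- exists (rev_edge d); rewrite rev_edgeK; split=> //; rewrite inE xH /=.
  by apply: contra dD; rewrite -surjective_pairing inE => ->.
Qed.

Lemma exists_descent_move E H H' : H \in GG0 E -> H' \in GG0 E -> H != H' ->
  (exists2 e, e \in single_edges H & (#|SEF e H :\: H'| < #|H :\: H'|)%N) \/
  (exists e d, [/\ e \in single_edges H, d \in double_edges H
                 & (#|DEM e d H :\: H'| < #|H :\: H'|)%N]).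
Proof.
move=> HS H'S neq_HH'.
have /subsetPn[e eH eH'] : ~~ (H \subset H').
  apply: contra neq_HH' => sub; rewrite eqEcard sub.
  by rewrite (card_GG0 HS) (card_GG0 H'S) leqnn.
have reH' := rev_edge_mem_pr HS H'S eH eH'.
have [reH | reH] := boolP (rev_edge e \in H); last first.
  left; exists e; first by rewrite inE eH.
  by rewrite SEF_exchange card_exchangeD_lt.
have /subsetPn[d dD' dD] : ~~ (double_edges H' \subset double_edges H).
  apply: contra eH' => sub.
  have eq_D : double_edges H' = double_edges H.
    apply/eqP; rewrite eqEcard sub.
    by rewrite (card_double_edges_GG0 HS) (card_double_edges_GG0 H'S) leqnn.
  have : e \in double_edges H by rewrite inE eH.
  by rewrite -eq_D => /setIdP[].
have [x [xS xH' rxH']] := single_edge_of_new_double HS H'S dD' dD.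
right; exists x, e; split=> //; first by rewrite inE eH.
by rewrite DEM_exchange card_exchangeD_lt.
Qed.

Lemma rev_double_edge H d : d \in double_edges H -> rev_edge d \in double_edges H.
Proof. by rewrite !inE /= -surjective_pairing andbC. Qed.

Lemma DEM_DEM H e d : e \in single_edges H -> d \in double_edges H ->
  DEM (rev_edge d) e (DEM e d H) = SEF e H.
Proof.
move=> /setIdP[eH reH] /setIdP[dH rdH].
rewrite !DEM_exchange rev_edgeK exchange_exchange //.
by apply: contraNneq reH => <-.
Qed.

End Edges.

Lemma sum_card_fibers (X Y : finType) (A : {set X}) (B : {set Y}) (f : X -> Y) :
  {in A, forall x, f x \in B} -> \sum_(y in B) #|[set x in A | f x == y]| = #|A|.
Proof.
move=> fAB; rewrite -sum1_card (partition_big f (mem B)) //=.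
by apply: eq_bigr => y _; rewrite sum1dep_card.
Qed.

Section MoveKernel.
Variables (R : numFieldType) (ST X : finType).
Variables (M : ST -> {set X}) (f : X -> ST -> ST).
Implicit Types (H K : ST) (x : X).

Definition move_kernel H H' : R :=
  if M H == set0 then (H == H')%:R
  else #|[set x in M H | f x H == H']|%:R / #|M H|%:R.

Lemma move_kernel_ge0 H H' : 0 <= move_kernel H H'.
Proof. by rewrite /move_kernel; case: ifP => _; rewrite ?divr_ge0. Qed.

Lemma move_kernel_gt0 H x : x \in M H -> 0 < move_kernel H (f x H).
Proof.
move=> xM; rewrite /move_kernel; have /negbTE-> : M H != set0 by apply/set0Pn; exists x.
by rewrite divr_gt0 // ltr0n card_gt0; apply/set0Pn; exists x; rewrite ?inE ?xM ?eqxx.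
Qed.

Variable S : {set ST}.
Hypothesis f_stable : forall H x, H \in S -> x \in M H -> f x H \in S.

Lemma sum_delta H : H \in S -> \sum_(K in S) ((K == H)%:R : R) = 1.
Proof.
move=> HS; rewrite (bigD1 H) //= eqxx big1 ?addr0 // => K /andP[_].
by move/negbTE->.
Qed.

Lemma sum_move_kernel_row H : H \in S -> \sum_(H' in S) move_kernel H H' = 1.
Proof.
move=> HS; rewrite /move_kernel; have [_ | M_neq0] := boolP (M H == set0).
  by under eq_bigr do rewrite eq_sym; apply: sum_delta.
rewrite -mulr_suml -natr_sum sum_card_fibers ?divff ?pnatr_eq0 ?cards_eq0 //.
by move=> x; apply: f_stable.
Qed.

Variable g : X -> X.
Hypothesis g_inv : involutive g.
Hypothesis f_reversible : forall H x, H \in S -> x \in M H ->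
  g x \in M (f x H) /\ f (g x) (f x H) = H.
Hypothesis card_M : {in S &, forall H K, #|M H| = #|M K|}.

Lemma sum_card_moves_into H' : H' \in S ->
  \sum_(H in S) #|[set x in M H | f x H == H']| = #|M H'|.
Proof.
move=> H'S; rewrite -(@sum_card_fibers _ _ _ S (f^~ H')); last first.
  by move=> x xM; apply: f_stable.
apply: eq_bigr => H HS; rewrite -(card_imset _ (can_inj g_inv)); apply: eq_card => y.
rewrite inE; apply/imsetP/andP => [[x] | [yM /eqP fyH]].
- rewrite inE => /andP[xM /eqP fxH] ->; have [gxM fgx] := f_reversible HS xM.
  by rewrite -fxH gxM fgx.
- have [gyM fgy] := f_reversible H'S yM; exists (g y); last by rewrite g_inv.
  by rewrite inE -fyH gyM fgy eqxx.
Qed.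

Lemma sum_move_kernel_col H' : H' \in S -> \sum_(H in S) move_kernel H H' = 1.
Proof.
move=> H'S; have M_eq0 H : H \in S -> (M H == set0) = (M H' == set0).
  by move=> HS; rewrite -!cards_eq0 (card_M HS H'S).
rewrite /move_kernel; have [M0 | M_neq0] := boolP (M H' == set0).
  by under eq_bigr => H HS do rewrite M_eq0 // M0; apply: sum_delta.
under eq_bigr => H HS do rewrite M_eq0 // (negbTE M_neq0) (card_M HS H'S).
by rewrite -mulr_suml -natr_sum sum_card_moves_into // divff // pnatr_eq0 cards_eq0.
Qed.

End MoveKernel.

Section Chains.
Variables (V : finType) (R : realFieldType) (S : {set {set V * V}}).
Implicit Types (H K : {set V * V}) (T : {set V * V} -> {set V * V} -> R).

Lemma doubly_stochastic_convex T1 T2 p q : 0 <= p -> 0 <= q -> p + q = 1 ->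
  doubly_stochastic S T1 -> doubly_stochastic S T2 ->
  doubly_stochastic S (fun H H' => p * T1 H H' + q * T2 H H').
Proof.
move=> p_ge0 q_ge0 pq1 [T1_ge0 T1_row T1_col] [T2_ge0 T2_row T2_col]; split.
- by move=> H H' HS H'S; rewrite addr_ge0 ?mulr_ge0 ?T1_ge0 ?T2_ge0.
- by move=> H HS; rewrite big_split /= -!mulr_sumr T1_row ?T2_row // !mulr1.
- by move=> H' H'S; rewrite big_split /= -!mulr_sumr T1_col ?T2_col // !mulr1.
Qed.

Variable T : {set V * V} -> {set V * V} -> R.
Hypothesis T_ge0 : forall H H', 0 <= T H H'.

Lemma Tpow_ge0 n H H' : 0 <= Tpow S T n H H'.
Proof.
elim: n H => [|n IHn] H //=.
by apply: sumr_ge0 => K _; rewrite mulr_ge0 ?T_ge0 ?IHn.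
Qed.

Lemma Tpow_gt0S n H K H' : K \in S -> 0 < T H K -> 0 < Tpow S T n K H' ->
  0 < Tpow S T n.+1 H H'.
Proof.
move=> KS TK_gt0 TnK_gt0 /=; rewrite (bigD1 K) //=.
apply: ltr_wpDr; last exact: mulr_gt0.
by apply: sumr_ge0 => K' _; rewrite mulr_ge0 ?T_ge0 ?Tpow_ge0.
Qed.

Lemma irreducible_by_descent (mu : {set V * V} -> {set V * V} -> nat) :
  (forall H H', H \in S -> H' \in S -> H != H' ->
     exists2 K, K \in S & 0 < T H K /\ (mu K H' < mu H H')%N) ->
  irreducible S T.
Proof.
move=> descent H H' HS H'S; move: {2}(mu H H') (leqnn (mu H H')) => m.
elim: m H HS => [|m IHm] H HS le_mu;
  (have [<- | neq_HH'] := eqVneq H H'; first by exists 0%N; rewrite /= eqxx ltr01);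
  have [K KS [TK_gt0 lt_mu]] := descent H H' HS H'S neq_HH'.
  by have := leq_trans lt_mu le_mu; rewrite ltn0.
have := leq_trans lt_mu le_mu; rewrite ltnS => /(IHm K KS)[n TnK_gt0].
by exists n.+1; apply: Tpow_gt0S TnK_gt0.
Qed.

Lemma aperiodic_by_consecutive_returns :
  (forall H, H \in S ->
     exists n, [/\ (0 < n)%N, 0 < Tpow S T n H H & 0 < Tpow S T n.+1 H H]) ->
  aperiodic S T.
Proof.
move=> returns H HS d d_div; have [n [n_gt0 Tn_gt0 Tn1_gt0]] := returns H HS.
by apply/eqP; rewrite -dvdn1 -(subSnn n) dvdn_sub ?d_div.
Qed.

End Chains.

Section SimpleMoves.
Variables (V : finType) (E : {set V * V}) (R : realFieldType).
Implicit Types (H K : {set V * V}) (e d : V * V).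

Definition single_double_pairs H := setX (single_edges H) (double_edges H).

Lemma T_DEM_move_kernel H H' :
  T_DEM R H H' = move_kernel R single_double_pairs (fun p => DEM p.1 p.2) H H'.
Proof. by rewrite /T_DEM /move_kernel -!cards_eq0 cardsX muln_eq0. Qed.

Lemma T_SEF_ge0 H H' : 0 <= T_SEF R H H'.
Proof. exact: move_kernel_ge0. Qed.

Lemma T_DEM_ge0 H H' : 0 <= T_DEM R H H'.
Proof. by rewrite T_DEM_move_kernel move_kernel_ge0. Qed.

Lemma T_SEF_doubly_stochastic : doubly_stochastic (GG0 E) (T_SEF R).
Proof.
have SEF_stable K e : K \in GG0 E -> e \in single_edges K -> SEF e K \in GG0 E.
  by move=> KS /(SEF_reversible KS)[].
have SEF_rev K e : K \in GG0 E -> e \in single_edges K ->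
    rev_edge e \in single_edges (SEF e K) /\ SEF (rev_edge e) (SEF e K) = K.
  by move=> KS /(SEF_reversible KS)[].
have card_single : {in GG0 E &, forall K K', #|single_edges K| = #|single_edges K'|}.
  by move=> K K' KS K'S; rewrite (card_single_edges_GG0 KS) (card_single_edges_GG0 K'S).
split=> [H H' _ _ | H HS | H' H'S]; first exact: T_SEF_ge0.
- exact: (sum_move_kernel_row _ SEF_stable HS).
- exact: (sum_move_kernel_col _ SEF_stable (@rev_edgeK V) SEF_rev card_single H'S).
Qed.

Lemma T_DEM_doubly_stochastic : doubly_stochastic (GG0 E) (T_DEM R).
Proof.
pose rev_pair p : (V * V) * (V * V) := (rev_edge p.2, rev_edge p.1).
have rev_pairK : involutive rev_pair by move=> [e d]; rewrite /rev_pair /= !rev_edgeK.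
have DEM_stable K p : K \in GG0 E -> p \in single_double_pairs K ->
    DEM p.1 p.2 K \in GG0 E.
  by case: p => e d KS /setXP[eS dD]; case: (DEM_reversible KS eS dD).
have DEM_rev K p : K \in GG0 E -> p \in single_double_pairs K ->
    rev_pair p \in single_double_pairs (DEM p.1 p.2 K)
    /\ DEM (rev_pair p).1 (rev_pair p).2 (DEM p.1 p.2 K) = K.
  case: p => e d KS /setXP[eS dD] /=.
  by case: (DEM_reversible KS eS dD) => _ rdS reD ->; split=> //; apply/setXP.
have card_pairs : {in GG0 E &, forall K K',
    #|single_double_pairs K| = #|single_double_pairs K'|}.
  move=> K K' KS K'S; rewrite !cardsX.
  by rewrite (card_single_edges_GG0 KS) (card_single_edges_GG0 K'S)
     (card_double_edges_GG0 KS) (card_double_edges_GG0 K'S).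
split=> [H H' _ _ | H HS | H' H'S]; first exact: T_DEM_ge0.
- under eq_bigr do rewrite T_DEM_move_kernel.
  exact: (sum_move_kernel_row _ DEM_stable HS).
- under eq_bigr do rewrite T_DEM_move_kernel.
  exact: (sum_move_kernel_col _ DEM_stable rev_pairK DEM_rev card_pairs H'S).
Qed.

Variables pSEF pDEM : R.
Hypotheses (pSEF_gt0 : 0 < pSEF) (pDEM_gt0 : 0 < pDEM).
Notation T := (T_SM pSEF pDEM).

Lemma T_SM_ge0 H H' : 0 <= T H H'.
Proof.
exact: addr_ge0 (mulr_ge0 (ltW pSEF_gt0) (T_SEF_ge0 _ _))
                (mulr_ge0 (ltW pDEM_gt0) (T_DEM_ge0 _ _)).
Qed.

Lemma T_SM_SEF_gt0 H e : e \in single_edges H -> 0 < T H (SEF e H).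
Proof.
move=> eS; apply: ltr_wpDr (mulr_ge0 (ltW pDEM_gt0) (T_DEM_ge0 _ _)) _.
exact: mulr_gt0 pSEF_gt0 (move_kernel_gt0 R (@SEF V) eS).
Qed.

Lemma T_SM_DEM_gt0 H e d : e \in single_edges H -> d \in double_edges H ->
  0 < T H (DEM e d H).
Proof.
move=> eS dD; apply: ltr_wpDl (mulr_ge0 (ltW pSEF_gt0) (T_SEF_ge0 _ _)) _.
rewrite mulr_gt0 // T_DEM_move_kernel.
by apply: (move_kernel_gt0 R (fun p => DEM p.1 p.2) (x := (e, d))); apply/setXP.
Qed.

Lemma T_SM_irreducible : irreducible (GG0 E) T.
Proof.
apply: (irreducible_by_descent T_SM_ge0 (mu := fun H H' => #|H :\: H'|)).
move=> H H' HS H'S /(exists_descent_move HS H'S)[[e eS lt_mu] | [e [d [eS dD lt_mu]]]].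
- exists (SEF e H) => //; first by case: (SEF_reversible HS eS).
  by split=> //; apply: T_SM_SEF_gt0.
- exists (DEM e d H) => //; first by case: (DEM_reversible HS eS dD).
  by split=> //; apply: T_SM_DEM_gt0.
Qed.

Lemma T_SM_aperiodic : double_edges E != set0 -> aperiodic (GG0 E) T.
Proof.
move=> DE_neq0; apply: aperiodic_by_consecutive_returns => H HS.
have T0_gt0 : 0 < Tpow (GG0 E) T 0 H H by rewrite /= eqxx ltr01.
have [SH0 | /set0Pn[e eS]] := eqVneq (single_edges H) set0.
  have THH_gt0 : 0 < T H H.
    by rewrite /T_SM /T_SEF /T_DEM SH0 !eqxx /= !mulr1 addr_gt0.
  have T1_gt0 := Tpow_gt0S T_SM_ge0 HS THH_gt0 T0_gt0.
  by exists 1%N; split=> //; exact: (Tpow_gt0S T_SM_ge0 HS THH_gt0 T1_gt0).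
have /set0Pn[d dD] : double_edges H != set0.
  by rewrite -cards_eq0 (card_double_edges_GG0 HS) cards_eq0.
have [SS reS SEFK] := SEF_reversible HS eS.
have [DS rdS reD _] := DEM_reversible HS eS dD.
have T_back : 0 < T (SEF e H) H by rewrite -{2}SEFK T_SM_SEF_gt0.
have T_DEM_SEF : 0 < T (DEM e d H) (SEF e H).
  rewrite -(DEM_DEM eS dD) T_SM_DEM_gt0 //.
  by rewrite -[e]rev_edgeK rev_double_edge.
exists 2%N; split=> //.
- exact: (Tpow_gt0S T_SM_ge0 SS (T_SM_SEF_gt0 eS) (Tpow_gt0S T_SM_ge0 HS T_back T0_gt0)).
- apply: (Tpow_gt0S T_SM_ge0 DS (T_SM_DEM_gt0 eS dD)).
  apply: (Tpow_gt0S T_SM_ge0 SS T_DEM_SEF).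
  exact: (Tpow_gt0S T_SM_ge0 HS T_back).
Qed.

End SimpleMoves.

Theorem lemma3p5 (R : realFieldType) (V : finType) (E : {set V * V})
  (pSEF pDEM : R) :
  loopless E ->
  0 < pSEF < 1 -> 0 < pDEM < 1 -> pSEF + pDEM = 1 ->
  [/\ doubly_stochastic (GG0 E) (T_SM pSEF pDEM),
      irreducible (GG0 E) (T_SM pSEF pDEM) &
      (double_edges E != set0 -> aperiodic (GG0 E) (T_SM pSEF pDEM))].
Proof.
move=> _ /andP[pSEF_gt0 _] /andP[pDEM_gt0 _] p_sum.
split; [| exact: T_SM_irreducible | exact: T_SM_aperiodic].
apply: doubly_stochastic_convex (ltW pSEF_gt0) (ltW pDEM_gt0) p_sum _ _.
- exact: T_SEF_doubly_stochastic.
- exact: T_DEM_doubly_stochastic.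
Qed.
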